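(* Let $\rho_m>0$, $f(\rho)=\rho_m-\rho$, and let $\bar\rho$ satisfy $\frac{\rho_m}{2}<\bar\rho<\rho_m$. Then the linear system on $\mathbb{R}^2\times\mathbb{R}$ \[ \begin{cases} \partial_t\psi-(f(\bar\rho)-2\bar\rho)\partial_x\psi-\bar\rho f^2(\bar\rho)\Delta\varphi=0,\\ \partial_t\varphi-f(\bar\rho)\partial_x\varphi+\frac{1}{f(\bar\rho)}\psi=0 \end{cases} \] admits planar wave solutions of the form \[ \psi=A\cos(ax+by+ct),\qquad \varphi=B\sin(ax+by+ct), \] where $a,b,c\in\mathbb{R}$ and $A,B\in\mathbb{R}$ with $AB\neq0$.
   Context: $\Delta$ is the Laplacian in $(x,y)$. This is the linearization (without viscosity) of the generalized Hughes mean-field game system with $\beta=2$ around the constant state $(\bar\rho, x/f(\bar\rho))$. *)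

From Stdlib Require Import Reals.
From Coquelicot Require Import Coquelicot.
Open Scope R_scope.

Definition dx (u : R -> R -> R -> R) x y t := Derive (fun s => u s y t) x.
Definition dy (u : R -> R -> R -> R) x y t := Derive (fun s => u x s t) y.
Definition dt (u : R -> R -> R -> R) x y t := Derive (fun s => u x y s) t.
Definition lap (u : R -> R -> R -> R) x y t :=
  Derive (fun s => dx u s y t) x + Derive (fun s => dy u x s t) y.

Definition f (rho_m rho : R) : R := rho_m - rho.

Definition is_solution (rho_m rhob : R) (psi phi : R -> R -> R -> R) : Prop :=
  forall x y t,
    ex_derive (fun s => psi x y s) t /\ ex_derive (fun s => psi s y t) x /\
    ex_derive (fun s => phi x y s) t /\ ex_derive (fun s => phi s y t) x /\
    ex_derive (fun s => phi x s t) y /\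
    ex_derive (fun s => dx phi s y t) x /\ ex_derive (fun s => dy phi x s t) y /\
    dt psi x y t - (f rho_m rhob - 2 * rhob) * dx psi x y t
      - rhob * (f rho_m rhob) ^ 2 * lap phi x y t = 0 /\
    dt phi x y t - f rho_m rhob * dx phi x y t + / f rho_m rhob * psi x y t = 0.

(* Substituting the ansatz, the first equation becomes a multiple of sin θ and
   the second a multiple of cos θ, where θ = a x + b y + c t.  The second one
   forces A = F B (F a - c) with F = f(ρ̄); the first one then reduces to the
   dispersion relation c² - 2 (F - ρ̄) a c + F (F - ρ̄) a² + ρ̄ F b² = 0.  For
   a = 1, b = 0 its discriminant is 4 ρ̄ (ρ̄ - F) = 4 ρ̄ (2 ρ̄ - ρ_m), which is
   positive exactly when ρ̄ > ρ_m / 2, and the root c = F - ρ̄ - √(ρ̄ (ρ̄ - F))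
   gives A = F (ρ̄ + √(ρ̄ (ρ̄ - F))) ≠ 0. *)

From Pilot Require Import Defs.
From Stdlib Require Import Reals Lra.
From Coquelicot Require Import Coquelicot.
Open Scope R_scope.

Definition wave (g : R -> R) (A a b c : R) : R -> R -> R -> R :=
  fun x y t => A * g (a * x + b * y + c * t).

Section PlaneWave.

Variables a b c : R.

Lemma dx_cos_wave (A x y t : R) :
  dx (wave cos A a b c) x y t = wave sin (- (A * a)) a b c x y t.
Proof. apply is_derive_unique; unfold wave; auto_derive; [easy | ring]. Qed.

Lemma dy_cos_wave (A x y t : R) :
  dy (wave cos A a b c) x y t = wave sin (- (A * b)) a b c x y t.
Proof. apply is_derive_unique; unfold wave; auto_derive; [easy | ring]. Qed.

Lemma dt_cos_wave (A x y t : R) :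
  dt (wave cos A a b c) x y t = wave sin (- (A * c)) a b c x y t.
Proof. apply is_derive_unique; unfold wave; auto_derive; [easy | ring]. Qed.

Lemma dx_sin_wave (B x y t : R) :
  dx (wave sin B a b c) x y t = wave cos (B * a) a b c x y t.
Proof. apply is_derive_unique; unfold wave; auto_derive; [easy | ring]. Qed.

Lemma dy_sin_wave (B x y t : R) :
  dy (wave sin B a b c) x y t = wave cos (B * b) a b c x y t.
Proof. apply is_derive_unique; unfold wave; auto_derive; [easy | ring]. Qed.

Lemma dt_sin_wave (B x y t : R) :
  dt (wave sin B a b c) x y t = wave cos (B * c) a b c x y t.
Proof. apply is_derive_unique; unfold wave; auto_derive; [easy | ring]. Qed.

Lemma lap_sin_wave (B x y t : R) :
  lap (wave sin B a b c) x y t = wave sin (- (B * (a ^ 2 + b ^ 2))) a b c x y t.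
Proof.
  unfold lap.
  rewrite (Derive_ext _ _ _ (fun s => dx_sin_wave B s y t)).
  rewrite (Derive_ext _ _ _ (fun s => dy_sin_wave B x s t)).
  fold (dx (wave cos (B * a) a b c) x y t) (dy (wave cos (B * b) a b c) x y t).
  rewrite dx_cos_wave, dy_cos_wave; unfold wave; ring.
Qed.

Lemma ex_derive_dx_sin_wave (B x y t : R) :
  ex_derive (fun s => dx (wave sin B a b c) s y t) x.
Proof.
  apply (ex_derive_ext (fun s => wave cos (B * a) a b c s y t)).
  - intro s; symmetry; apply dx_sin_wave.
  - unfold wave; auto_derive; easy.
Qed.

Lemma ex_derive_dy_sin_wave (B x y t : R) :
  ex_derive (fun s => dy (wave sin B a b c) x s t) y.
Proof.
  apply (ex_derive_ext (fun s => wave cos (B * b) a b c x s t)).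
  - intro s; symmetry; apply dy_sin_wave.
  - unfold wave; auto_derive; easy.
Qed.

End PlaneWave.

Definition dispersion (F rho a b c : R) : R :=
  c ^ 2 - 2 * (F - rho) * a * c + F * (F - rho) * a ^ 2 + rho * F * b ^ 2.

Lemma plane_wave_is_solution (rho_m rhob a b c A B : R) :
  let F := Defs.f rho_m rhob in
  F <> 0 -> A = F * B * (F * a - c) -> dispersion F rhob a b c = 0 ->
  is_solution rho_m rhob (wave cos A a b c) (wave sin B a b c).
Proof.
  intros F HF -> Hdisp x y t.
  rewrite dt_cos_wave, dx_cos_wave, dt_sin_wave, dx_sin_wave, lap_sin_wave.
  repeat split;
    auto using ex_derive_dx_sin_wave, ex_derive_dy_sin_wave;
    try (unfold wave; auto_derive; easy).
  - transitivity (F * B * sin (a * x + b * y + c * t) * dispersion F rhob a b c).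
    + unfold wave, dispersion, F; ring.
    + rewrite Hdisp; ring.
  - unfold wave, F in *; field; exact HF.
Qed.

Lemma dispersion_root (F rho : R) :
  0 <= rho * (rho - F) ->
  dispersion F rho 1 0 (F - rho - sqrt (rho * (rho - F))) = 0.
Proof.
  intro Hdisc.
  pose proof (sqrt_sqrt _ Hdisc) as Hsq.
  unfold dispersion; nra.
Qed.

Theorem lemma1 (rho_m rhob : R) :
  0 < rho_m -> rho_m / 2 < rhob -> rhob < rho_m ->
  exists a b c A B : R, A * B <> 0 /\
    is_solution rho_m rhob
      (fun x y t => A * cos (a * x + b * y + c * t))
      (fun x y t => B * sin (a * x + b * y + c * t)).
Proof.
  intros Hm Hlow Hup.
  set (F := Defs.f rho_m rhob).
  set (sq := sqrt (rhob * (rhob - F))).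
  assert (HF : 0 < F) by (unfold F, Defs.f; lra).
  assert (Hdisc : 0 <= rhob * (rhob - F)) by (unfold F, Defs.f; nra).
  assert (Hsq : 0 <= sq) by apply sqrt_pos.
  exists 1, 0, (F - rhob - sq), (F * (rhob + sq)), 1.
  split.
  - rewrite Rmult_1_r; apply Rgt_not_eq, Rmult_lt_0_compat; lra.
  - apply plane_wave_is_solution.
    + apply Rgt_not_eq, HF.
    + fold F; ring.
    + apply dispersion_root, Hdisc.
Qed.
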